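(* For every $t\in\mathbb{N}$ there exists $n_0(t)$ such that for all $n\ge n_0(t)$: if $\mathcal{F},\mathcal{G}\subseteq\mathcal{M}_{2n}$ are $t$-cross-intersecting, then \[|\mathcal{F}|\cdot|\mathcal{G}| \le \big((2(n-t)-1)!!\big)^2.\]
   Context: $\mathcal{M}_{2n}$ is the set of perfect matchings of the complete graph $K_{2n}$ (each a set of $n$ edges). Two families $\mathcal{F},\mathcal{G}\subseteq\mathcal{M}_{2n}$ are $t$-cross-intersecting if $|m\cap m'|\ge t$ for all $m\in\mathcal{F}$, $m'\in\mathcal{G}$. $(2k-1)!!=1\cdot3\cdots(2k-1)$. *)

From mathcomp Require Import all_boot.
Unset Printing Implicit Defensive.

(* Vertex set of K_{2n} is 'I_(2n); an edge is a 2-element subset. *)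
Definition is_perfect_matching (n : nat) (m : {set {set 'I_(2 * n)}}) : bool :=
  [&& [forall e in m, #|e| == 2],
      [forall e in m, forall f in m, (e != f) ==> [disjoint e & f]] &
      [forall v : 'I_(2 * n), exists e in m, v \in e]].

Definition matchings (n : nat) : {set {set {set 'I_(2 * n)}}} :=
  [set m | is_perfect_matching n m].

Definition cross_intersecting (n t : nat) (F G : {set {set {set 'I_(2 * n)}}}) : Prop :=
  forall m m', m \in F -> m' \in G -> t <= #|m :&: m'|.

(* odd_dfact k = (2k-1)!! = 1 * 3 * ... * (2k-1);  odd_dfact 0 = 1 = (-1)!!. *)
Definition odd_dfact (k : nat) : nat := \prod_(i < k) (2 * i + 1).

From mathcomp Require Import all_boot.
From mathcomp Require Import zify ring.

(* Choosing S among sets of at most q edges to maximise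
   |F(S)| r ^ |S|, where F(S) is the set of members of F containing S, and recursing on
   F \ F(S), covers every family F of perfect matchings, up to r ^ q (2(n-q)-1)!! members,
   by subfamilies F(S) with cores S of fewer than q edges that are r-spread: no edge outside
   S lies in more than a 1/r fraction of F(S).  For r > n + q, spreadness forces the cores of
   two t-cross-intersecting families to be t-cross-intersecting as well.  Then either the
   cores of F share more than t edges, or all cores of G meet a set W of size at most
   q + q ^ (t+1) in more than t edges, or the cores of F share a t-set T that every core of
   G contains unless it meets W in more than t edges.  In each case |F| |G| is at most
   (2(n-t)-1)!! ^ 2, because the remainders are negligible once q is a large multiple of
   log n. *)

Set Implicit Arguments.
Unset Strict Implicit.
Unset Printing Implicit Defensive.

Lemma leq_card_bigcup (I T : finType) (P : {pred I}) (F : I -> {set T}) :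
  #|\bigcup_(i in P) F i| <= \sum_(i in P) #|F i|.
Proof.
elim/big_rec2: _ => [|i x y _ IH]; first by rewrite cards0.
by apply: leq_trans (leq_card_setU _ _) _; rewrite leq_add2l.
Qed.

Lemma odd_dfactS k : odd_dfact k.+1 = odd_dfact k * (2 * k + 1).
Proof. by rewrite /odd_dfact big_ord_recr. Qed.

(** * Perfect matchings of a finite set *)

Section PerfectMatching.
Variable T : finType.
Implicit Types (V : {set T}) (e : {set T}) (m S : {set {set T}}).

Definition perfect_matching V m : bool :=
  [&& [forall e in m, (#|e| == 2) && (e \subset V)],
      [forall e in m, forall f in m, (e != f) ==> [disjoint e & f]] &
      [forall v in V, exists e in m, v \in e]].

Lemma pm_card_edge V m e : perfect_matching V m -> e \in m -> #|e| = 2.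
Proof. by case/and3P=> /forall_inP edgeP _ _ /edgeP /andP[/eqP]. Qed.

Lemma pm_edge_sub V m e : perfect_matching V m -> e \in m -> e \subset V.
Proof. by case/and3P=> /forall_inP edgeP _ _ /edgeP /andP[]. Qed.

Lemma pm_disjoint V m e f :
  perfect_matching V m -> e \in m -> f \in m -> e != f -> [disjoint e & f].
Proof. by case/and3P=> _ /forall_inP disjP _ /disjP /forall_inP H /H /implyP. Qed.

Lemma pm_covered V m v : perfect_matching V m -> v \in V -> exists2 e, e \in m & v \in e.
Proof. by case/and3P=> _ _ /forall_inP covP /covP /exists_inP. Qed.

Lemma pm_trivIset V m : perfect_matching V m -> trivIset m.
Proof. by move=> pm; apply/trivIsetP => e f; exact: pm_disjoint pm. Qed.

Lemma pm_card_cover V m S : perfect_matching V m -> S \subset m -> #|cover S| = 2 * #|S|.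
Proof.
move=> pm sSm; have /eqP <- := trivIsetS sSm (pm_trivIset pm).
rewrite mulnC -sum_nat_const; apply: eq_bigr => e eS.
exact: pm_card_edge pm (subsetP sSm e eS).
Qed.

Lemma pm_cover_sub V m : perfect_matching V m -> cover m \subset V.
Proof. by move=> pm; apply/bigcupsP => e; apply: pm_edge_sub. Qed.

Lemma pm_card V m : perfect_matching V m -> 2 * #|m| <= #|V|.
Proof. by move=> pm; rewrite -(pm_card_cover pm (subxx m)) subset_leq_card ?pm_cover_sub. Qed.

Lemma perfect_matchingD V m S :
  perfect_matching V m -> S \subset m -> perfect_matching (V :\: cover S) (m :\: S).
Proof.
move=> pm sSm; apply/and3P; split.
- apply/forall_inP => e; rewrite inE => /andP[eS em].
  rewrite (pm_card_edge pm em) eqxx /=; apply/subsetP => x xe.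
  rewrite inE (subsetP (pm_edge_sub pm em)) // andbT; apply/bigcupP => -[f fS xf].
  have ef : e != f by apply: contraNneq eS => ->.
  by rewrite (disjointFr (pm_disjoint pm em (subsetP sSm f fS) ef) xe) in xf.
- apply/forall_inP => e; rewrite inE => /andP[_ em]; apply/forall_inP => f.
  by rewrite inE => /andP[_ fm]; apply/implyP; apply: pm_disjoint pm em fm.
- apply/forall_inP => x; rewrite inE => /andP[xS xV].
  have [e em xe] := pm_covered pm xV; apply/exists_inP; exists e => //.
  rewrite inE em andbT; apply: contraNN xS => eS; apply/bigcupP; exists e => //.
Qed.

Lemma setDS_inj m1 m2 S : S \subset m1 -> S \subset m2 -> m1 :\: S = m2 :\: S -> m1 = m2.
Proof. by move=> /setIidPr s1 /setIidPr s2 E; rewrite -(setID m1 S) -(setID m2 S) s1 s2 E. Qed.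

Lemma pm_edge_at V m v :
  perfect_matching V m -> v \in V -> exists2 u, u \in V :\ v & [set v; u] \in m.
Proof.
move=> pm vV; have [e em ve] := pm_covered pm vV.
have /eqP/cards2P[x [y [xy exy]]] := pm_card_edge pm em.
have [u uv eu] : exists2 u, u != v & e = [set v; u].
  move: ve; rewrite exy !inE => /orP[] /eqP ->; first by exists y; rewrite // eq_sym.
  by exists x; rewrite // setUC.
exists u; rewrite -?eu // !inE uv (subsetP (pm_edge_sub pm em)) //.
by rewrite eu !inE eqxx orbT.
Qed.

Lemma card_pm_sup V S :
  #|[set m | perfect_matching V m & S \subset m]| <=
  #|[set m | perfect_matching (V :\: cover S) m]|.
Proof.
rewrite -(@card_in_imset _ _ (fun m => m :\: S) [set m | perfect_matching V m & S \subset m]).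
  apply/subset_leq_card/subsetP => _ /imsetP[m + ->]; rewrite !inE => /andP[pm sSm].
  exact: perfect_matchingD.
by move=> m1 m2; rewrite !inE => /andP[_ h1] /andP[_ h2]; apply: setDS_inj.
Qed.

Lemma card_perfect_matchings k V :
  #|V| = 2 * k -> #|[set m | perfect_matching V m]| <= odd_dfact k.
Proof.
elim: k V => [|k IH] V cV.
  rewrite /odd_dfact big_ord0 -(cards1 (set0 : {set {set T}})) subset_leq_card //.
  apply/subsetP => m; rewrite !inE => /pm_card; rewrite cV leqn0 muln_eq0 /=.
  by rewrite cards_eq0.
have [v vV] : exists v, v \in V by apply/set0Pn; rewrite -card_gt0 cV.
have cover_pairs : [set m | perfect_matching V m] \subset
    \bigcup_(u in V :\ v) [set m | perfect_matching V m & [set [set v; u]] \subset m].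
  apply/subsetP => m; rewrite inE => pm; have [u uVv vum] := pm_edge_at pm vV.
  by apply/bigcupP; exists u; rewrite // inE pm sub1set.
apply: leq_trans (subset_leq_card cover_pairs) (leq_trans (leq_card_bigcup _ _) _).
have cVv : #|V :\ v| = 2 * k + 1 by move: cV; rewrite (cardsD1 v V) vV; lia.
rewrite odd_dfactS mulnC -cVv -sum_nat_const; apply: leq_sum => u; rewrite !inE => /andP[uv uV].
apply: leq_trans (card_pm_sup _ _) (IH _ _).
have sub_vu : [set v; u] \subset V by rewrite subUset !sub1set vV.
by rewrite cover1 cardsD (setIidPr sub_vu) cards2 eq_sym uv cV; lia.
Qed.

Lemma card_perfect_matchings_sup k V S :
  #|V| = 2 * k -> #|[set m | perfect_matching V m & S \subset m]| <= odd_dfact (k - #|S|).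
Proof.
move=> cV; have [-> | [m0]] := set_0Vmem [set m | perfect_matching V m & S \subset m].
  by rewrite cards0.
rewrite inE => /andP[pm0 sS0]; apply: leq_trans (card_pm_sup _ _) (card_perfect_matchings _).
have cSk : #|S| <= k by have := pm_card pm0; have := subset_leq_card sS0; rewrite cV; lia.
have coverSV : cover S \subset V.
  apply: subset_trans (pm_cover_sub pm0); apply/bigcupsP => e eS.
  exact: bigcup_sup (subsetP sS0 e eS).
by rewrite cardsD (setIidPr coverSV) (pm_card_cover pm0 sS0) cV; lia.
Qed.

End PerfectMatching.

Lemma leq_expn2r m1 m2 e : m1 <= m2 -> m1 ^ e <= m2 ^ e.
Proof. by move=> m12; elim: e => // e IH; rewrite !expnS leq_mul. Qed.

Lemma odd_dfact_mulX k j : odd_dfact k * (2 * k + 1) ^ j <= odd_dfact (k + j).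
Proof.
elim: j => [|j IH]; first by rewrite muln1 addn0.
rewrite [k + _]addnS odd_dfactS expnS mulnCA mulnC leq_mul // ; lia.
Qed.

Lemma leq_odd_dfact a b : a <= b -> odd_dfact a <= odd_dfact b.
Proof.
move=> ab; rewrite -(subnKC ab); apply: leq_trans (odd_dfact_mulX a (b - a)).
by rewrite leq_pmulr // expn_gt0 addn1.
Qed.

Lemma bin_leq_exp a k : 'C(a, k) <= a ^ k.
Proof.
apply: (@leq_trans (a ^_ k)); first by rewrite -bin_ffact leq_pmulr ?fact_gt0.
rewrite ffact_prod -[k in a ^ k]card_ord -prod_nat_const; apply: leq_prod => i _; exact: leq_subr.
Qed.

Lemma exists_subset_card (T : finType) (X : {set T}) k :
  k <= #|X| -> exists2 A : {set T}, A \subset X & #|A| = k.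
Proof.
case/card_geqP=> s [us <- sX]; exists [set x in s]; last by rewrite cardsE; apply/card_uniqP.
by apply/subsetP => x; rewrite inE => /sX.
Qed.

Lemma card_ksubsets (T : finType) (B : {set T}) k :
  #|[set A in powerset B | #|A| == k]| <= #|B| ^ k.
Proof.
pose sB := {x : T | x \in B}.
have valK (A : {set T}) : A \subset B -> [set val x | x in [set x : sB | val x \in A]] = A.
  move=> AB; apply/setP => x; apply/imsetP/idP => [[y] | xA]; first by rewrite inE => yA ->.
  by exists (exist _ x (subsetP AB x xA)); rewrite ?inE.
have -> : [set A in powerset B | #|A| == k] =
          (fun A : {set sB} => val @: A) @: [set A : {set sB} | #|A| == k].
  apply/setP => A; rewrite !inE; apply/andP/imsetP => [[AB /eqP <-] | [A' + ->]].
    exists [set x : sB | val x \in A]; last by rewrite valK.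
    by rewrite inE -{2}(valK A AB) card_imset //; exact: val_inj.
  rewrite inE card_imset => [/eqP cA|]; last exact: val_inj.
  by split; [apply/subsetP => _ /imsetP[y _ ->]; exact: valP | rewrite cA].
by apply: leq_trans (leq_imset_card _ _) _; rewrite card_draws card_sig bin_leq_exp.
Qed.

(** * Matchings of K_2n and their stars *)

Section Matchings.
Variable n : nat.
Local Notation edgeset := {set {set 'I_(2 * n)}}.
Local Notation family := {set {set {set 'I_(2 * n)}}}.
Implicit Types (m S T W : edgeset) (F R TT : family).

Lemma matchings_pm m : m \in matchings n -> perfect_matching [set: 'I_(2 * n)] m.
Proof.
rewrite inE => /and3P[edgeP disjP covP]; apply/and3P; split => //.
- by apply/forall_inP => e /(forall_inP edgeP) ->; rewrite subsetT.
- by apply/forall_inP => v _; exact: (forallP covP).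
Qed.

Lemma card_matching m : m \in matchings n -> #|m| <= n.
Proof. by move/matchings_pm/pm_card; rewrite cardsT card_ord leq_pmul2l. Qed.

Definition star S : family := [set m in matchings n | S \subset m].

Lemma card_star S : #|star S| <= odd_dfact (n - #|S|).
Proof.
have cV : #|[set: 'I_(2 * n)]| = 2 * n by rewrite cardsT card_ord.
apply: leq_trans (card_perfect_matchings_sup S cV); apply/subset_leq_card/subsetP => m.
by rewrite inE => /andP[/matchings_pm pm Sm]; rewrite inE pm Sm.
Qed.

Lemma card_le_cover_stars F R (TT : family) k :
  F \subset matchings n -> {in TT, forall S, k <= #|S|} ->
  (forall m, m \in F -> m \notin R -> exists2 S, S \in TT & S \subset m) ->
  #|F| <= #|R| + #|TT| * odd_dfact (n - k).
Proof.
move=> FM TTk coverF.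
have sub : F \subset R :|: \bigcup_(S in TT) star S.
  apply/subsetP => m mF; rewrite inE; case: (boolP (m \in R)) => //= mR.
  have [S SR Sm] := coverF m mF mR; apply/bigcupP; exists S => //.
  by rewrite inE Sm (subsetP FM m mF).
apply: leq_trans (subset_leq_card sub) _; apply: leq_trans (leq_card_setU _ _) _.
rewrite leq_add2l -sum_nat_const; apply: leq_trans (leq_card_bigcup _ _) _.
apply: leq_sum => S /TTk kS; apply: leq_trans (card_star S) _.
by apply: leq_odd_dfact; apply: leq_sub2l.
Qed.

Lemma card_le_cover_trace F R (W : edgeset) k :
  F \subset matchings n ->
  (forall m, m \in F -> m \notin R -> exists2 S, k <= #|S :&: W| & S \subset m) ->
  #|F| <= #|R| + #|W| ^ k * odd_dfact (n - k).
Proof.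
move=> FM coverF; pose TT := [set A in powerset W | #|A| == k].
apply: leq_trans (card_le_cover_stars (TT := TT) (k := k) FM _ _) _.
- by move=> S; rewrite inE => /andP[_ /eqP ->].
- move=> m mF mR; have [S kSW Sm] := coverF m mF mR.
  have [A ASW cA] := exists_subset_card kSW.
  exists A; first by rewrite inE powersetE cA eqxx (subset_trans ASW (subsetIr _ _)).
  exact: subset_trans ASW (subset_trans (subsetIl _ _) Sm).
- by rewrite leq_add2l leq_mul2r card_ksubsets orbT.
Qed.

(* Such an m meets m0 outside T, so it contains e |: T for one of the at most n edges e of m0. *)
Lemma card_star_meet (m0 : edgeset) T t :
  m0 \in matchings n -> ~~ (T \subset m0) -> #|T| = t ->
  #|[set m in star T | t <= #|m0 :&: m|]| <= n * odd_dfact (n - t.+1).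
Proof.
move=> m0M Tm0 cT; set A := [set m in _ | _].
have AM : A \subset matchings n by apply/subsetP => m; rewrite !inE => /andP[/andP[]].
pose TT := [set e |: T | e in m0 :\: T].
apply: leq_trans (card_le_cover_stars (R := set0) (TT := TT) (k := t.+1) AM _ _) _.
- by move=> _ /imsetP[e + ->]; rewrite inE => /andP[eT _]; rewrite cardsU1 eT cT.
- move=> m; rewrite !inE => /andP[/andP[_ Tm] tm0m] _.
  have /subsetPn[e] : ~~ (m0 :&: m \subset T).
    apply: contra Tm0 => sub; suff <- : m0 :&: m = T by apply: subsetIl.
    by apply/eqP; rewrite eqEcard sub cT.
  rewrite inE => /andP[em0 em] eT; exists (e |: T).
    by apply/imsetP; exists e; rewrite // inE eT em0.
  by rewrite subUset sub1set em.
- rewrite cards0 add0n leq_mul2r; apply/orP; right.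
  apply: leq_trans (leq_imset_card _ _) (leq_trans _ (card_matching m0M)).
  by rewrite subset_leq_card ?subsetDl.
Qed.

End Matchings.

(** * Spread approximations *)

Section Spread.
Variable E : finType.
Implicit Types (m S T V W : {set E}) (F P R : {set {set E}}) (p : {set E} * {set {set E}}).

Definition spread (r q : nat) S P : Prop :=
  [/\ P != set0, #|S| < q, {in P, forall m, S \subset m} &
      forall e, e \notin S -> r * #|[set m in P | e \in m]| <= #|P|].

Definition spread_approx (r q Rb : nat) F (D : {set {set E} * {set {set E}}}) R : Prop :=
  [/\ #|R| <= Rb,
      {in D, forall p, p.2 \subset F /\ spread r q p.1 p.2} &
      forall m, m \in F -> m \notin R -> exists2 p, p \in D & m \in p.2].

Section Approximation.
Variables (r q Rb : nat).
Hypothesis r_gt0 : 0 < r.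

Definition q_bounded F := forall S, #|S| = q -> r ^ q * #|[set m in F | S \subset m]| <= Rb.

Lemma q_boundedS F1 F2 : F1 \subset F2 -> q_bounded F2 -> q_bounded F1.
Proof.
move=> sF12 bF2 S cS; apply: leq_trans (bF2 S cS); rewrite leq_mul2l subset_leq_card ?orbT //.
by apply/subsetP => m; rewrite !inE => /andP[/(subsetP sF12) -> ->].
Qed.

(* Maximality of the weight of S against that of e |: S is exactly spreadness. *)
Lemma exists_spread_core F :
  q_bounded F -> Rb < #|F| -> exists S, spread r q S [set m in F | S \subset m].
Proof.
move=> bF bigF; pose weight S := #|[set m in F | S \subset m]| * r ^ #|S|.
have q0 : #|(set0 : {set E})| <= q by rewrite cards0.
have [S Sq Smax] := @arg_maxnP _ set0 (fun S : {set E} => #|S| <= q) weight q0.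
have FS : #|F| <= weight S.
  have := Smax set0 q0; rewrite /weight cards0 muln1.
  by congr (_ <= _); apply/eq_card => m; rewrite !inE sub0set andbT.
have Sltq : #|S| < q.
  rewrite ltn_neqAle Sq andbT; apply: contraTneq FS => cS; rewrite -ltnNge.
  by apply: leq_ltn_trans bigF; rewrite /weight mulnC cS bF.
exists S; split => //.
- rewrite -card_gt0 lt0n; apply: contraTneq FS; rewrite /weight => ->.
  by rewrite mul0n -ltnNge (leq_ltn_trans (leq0n Rb) bigF).
- by move=> m; rewrite inE => /andP[].
- move=> e eS; have Seq : #|e |: S| <= q by rewrite cardsU1 eS.
  have := Smax _ Seq; rewrite /weight cardsU1 eS expnS mulnA (mulnC _ r).
  rewrite /= leq_pmul2r ?expn_gt0 ?r_gt0 //; congr (_ * _ <= _); apply/eq_card => m.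
  by rewrite !inE subUset sub1set; case: (e \in m); rewrite ?andbF ?andbT.
Qed.

Lemma exists_spread_approx F : q_bounded F -> exists D R, spread_approx r q Rb F D R.
Proof.
have [K] := ubnP #|F|; elim: K F => // K IH F cFK bF.
have [smallF | bigF] := leqP #|F| Rb.
  by exists set0, F; split => // [p | m ->]; rewrite ?inE.
have [S spS] := exists_spread_core bF bigF; set P := [set m in F | S \subset m] in spS.
have PF : P \subset F by apply/subsetP => m; rewrite inE => /andP[].
have [Pn0 _ _ _] := spS; have F'F := subsetDl F P.
have cF' : #|F :\: P| < K.
  by move: cFK; rewrite cardsD (setIidPr PF); move: Pn0; rewrite -card_gt0; lia.
have [D [R [cR DP coverF']]] := IH _ cF' (q_boundedS F'F bF).
exists ((S, P) |: D), R; split => // [p | m mF mR].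
  rewrite in_setU1 => /predU1P[-> // | pD]; have [p2F' spp] := DP p pD.
  by split=> //; apply: subset_trans p2F' F'F.
have [mP | mP] := boolP (m \in P); first by exists (S, P); rewrite ?setU11.
have [|p pD mp] := coverF' m _ mR; first by rewrite inE mP.
by exists p; rewrite ?setU1r.
Qed.

End Approximation.

Lemma spread_approx0 r q Rb F R :
  spread_approx r q Rb F set0 R -> #|F| <= Rb.
Proof.
case=> cR _ coverF; apply: leq_trans _ cR; apply/subset_leq_card/subsetP => m mF.
by apply: contraT => mR; have [p] := coverF m mF mR; rewrite inE.
Qed.

Lemma spread_approx_core_small r q Rb F D R p :
  spread_approx r q Rb F D R -> p \in D -> #|p.1| < q.
Proof. by case=> _ DP _ /DP[_ []]. Qed.

Lemma sum_card_containing n P :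
  {in P, forall m, #|m| <= n} -> \sum_e #|[set m in P | e \in m]| <= n * #|P|.
Proof.
move=> Pn; have -> : \sum_e #|[set m in P | e \in m]| = \sum_(m in P) #|m|.
  rewrite (eq_bigr (fun e => \sum_(m in P) (e \in m : nat))) => [|e _]; last first.
    rewrite -sum1_card (eq_bigl (fun m => (m \in P) && (e \in m))) => [|m]; last by rewrite inE.
    by rewrite big_mkcondr; apply: eq_bigr => m _; case: (e \in m).
  rewrite exchange_big; apply: eq_bigr => m _; rewrite -sum1_card [RHS]big_mkcond /=.
  by apply: eq_bigr => e _; case: (e \in m).
by rewrite mulnC -sum_nat_const leq_sum.
Qed.

(* If #|S :&: S'| < t, every pair of P x P' shares an element e outside S :&: S'.  Pairs with
   e in S :\: S' number at most #|S| #|P| #|P'| / r by spreadness of P', pairs with e outside S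
   at most n #|P| #|P'| / r by spreadness of P; since #|S| + n < r this misses some pair. *)
Lemma spread_cores_meet r q n t S P S' P' :
  spread r q S P -> spread r q S' P' -> {in P', forall m, #|m| <= n} ->
  n + q < r -> {in P & P', forall m m', t <= #|m :&: m'|} -> t <= #|S :&: S'|.
Proof.
move=> [Pn0 Sq _ spP] [P'n0 _ _ spP'] P'n rbig PP't; rewrite leqNgt; apply/negP => small.
pose Pe e := [set m in P | e \in m]; pose P'e e := [set m in P' | e \in m].
pose A := \bigcup_(e in S :\: S') setX P (P'e e).
pose B := \bigcup_(e in ~: S) setX (Pe e) (P'e e).
have PP'AB : setX P P' \subset A :|: B.
  apply/subsetP => -[m m']; rewrite inE /= => /andP[mP m'P].
  have /subsetPn[e] : ~~ (m :&: m' \subset S :&: S').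
    apply: contraL small => sub; rewrite -leqNgt.
    exact: leq_trans (PP't m m' mP m'P) (subset_leq_card sub).
  rewrite !inE => /andP[em em'] /nandP eSS'; apply/orP.
  case: (boolP (e \in S)) => eS.
    have eS'n : e \notin S' by case: eSS' => //; rewrite eS.
    by left; apply/bigcupP; exists e; rewrite !inE ?eS ?eS'n ?mP ?m'P ?em'.
  by right; apply/bigcupP; exists e; rewrite !inE ?eS ?mP ?em ?m'P ?em'.
have rA : r * #|A| <= #|S| * (#|P| * #|P'|).
  apply: leq_trans (leq_mul (leqnn r) (leq_card_bigcup _ _)) _; rewrite big_distrr /=.
  apply: (@leq_trans (\sum_(e in S :\: S') #|P| * #|P'|)).
    apply: leq_sum => e; rewrite inE => /andP[eS' _].
    by rewrite cardsX mulnCA leq_mul2l spP' ?orbT.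
  by rewrite sum_nat_const leq_mul2r subset_leq_card ?subsetDl ?orbT.
have rB : r * #|B| <= n * (#|P| * #|P'|).
  apply: leq_trans (leq_mul (leqnn r) (leq_card_bigcup _ _)) _; rewrite big_distrr /=.
  apply: (@leq_trans (\sum_(e in ~: S) #|P| * #|P'e e|)).
    by apply: leq_sum => e; rewrite inE => eS; rewrite cardsX mulnA leq_mul2r spP ?orbT.
  rewrite -big_distrr mulnCA leq_mul2l (leq_trans _ (sum_card_containing P'n)) ?orbT //.
  by rewrite [X in _ <= X](bigID (mem (~: S))) leq_addr.
have PP'0 : 0 < #|P| * #|P'| by rewrite muln_gt0 !card_gt0 Pn0 P'n0.
have : r * (#|P| * #|P'|) <= (#|S| + n) * (#|P| * #|P'|).
  rewrite -cardsX mulnDl; apply: leq_trans (leq_mul (leqnn r) (subset_leq_card PP'AB)) _.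
  rewrite cardsX; apply: leq_trans (leq_mul (leqnn r) (leq_card_setU _ _)) _.
  by rewrite mulnDr leq_add.
by rewrite leq_pmul2r //; lia.
Qed.

Definition common_subsets (CF : {set {set E}}) t :=
  [set T : {set E} | (#|T| == t) && [forall S in CF, T \subset S]].

Section CrossCores.
Variables (t q : nat) (CF CG : {set {set E}}) (S0 : {set E}).
Hypotheses (S0F : S0 \in CF) (CFq : {in CF, forall S, #|S| <= q})
  (CFG : {in CF & CG, forall S S', t <= #|S :&: S'|}).

(* W collects S0 and, for every t-subset of S0 not common to CF, a member of CF missing it. *)
Lemma cross_cores_witness :
  exists2 W : {set E}, #|W| <= q + q ^ t * q &
    {in CG, forall S', (exists2 T : {set E}, T \in common_subsets CF t & T \subset S') \/
                       t < #|S' :&: W|}.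
Proof.
pose Ts := [set T in powerset S0 | #|T| == t] :\: common_subsets CF t.
pose wit T := odflt S0 [pick S in CF | ~~ (T \subset S)].
have witP T : T \in Ts -> wit T \in CF /\ ~~ (T \subset wit T).
  rewrite !inE => /andP[ncommon /andP[_ cT]]; rewrite cT /= in ncommon.
  rewrite /wit; case: pickP => [S /andP[SF TS] // | none]; case/negP: ncommon.
  by apply/forall_inP => S SF; move: (none S); rewrite SF => /negbFE.
exists (S0 :|: \bigcup_(T in Ts) wit T).
  apply: leq_trans (leq_card_setU _ _) _; rewrite leq_add ?CFq //.
  apply: leq_trans (leq_card_bigcup _ _) _.
  apply: (@leq_trans (\sum_(T in Ts) q)); first by apply: leq_sum => T /witP[/CFq].
  rewrite sum_nat_const leq_mul2r; apply/orP; right.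
  apply: leq_trans (subset_leq_card (subsetDl _ _)) _.
  exact: leq_trans (card_ksubsets _ _) (leq_expn2r _ (CFq S0F)).
move=> S' S'G; have [lt | le] := ltnP t #|S0 :&: S'|.
  by right; apply: leq_trans lt _; rewrite subset_leq_card // setIC setIS ?subsetUl.
have cT : #|S0 :&: S'| = t by apply/eqP; rewrite eqn_leq le CFG.
have [Tc | Tnc] := boolP (S0 :&: S' \in common_subsets CF t).
  by left; exists (S0 :&: S'); rewrite ?subsetIr.
have [witF nTw] : wit (S0 :&: S') \in CF /\ ~~ (S0 :&: S' \subset wit (S0 :&: S')).
  by apply: witP; rewrite in_setD Tnc !inE subsetIl cT eqxx.
have /subsetPn[x] : ~~ (wit (S0 :&: S') :&: S' \subset S0 :&: S').
  apply: contra nTw => sub; suff witS' : wit (S0 :&: S') :&: S' = S0 :&: S'.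
    by rewrite -{1}witS' subsetIl.
  by apply/eqP; rewrite eqEcard sub cT CFG.
rewrite inE => /andP[xw xS'] xT; right.
apply: (@leq_trans #|x |: (S0 :&: S')|); first by rewrite cardsU1 xT cT.
apply/subset_leq_card/subsetP => y; rewrite in_setU1 => /predU1P[-> | ].
  rewrite !inE xS' orbC; apply/orP; left; apply/bigcupP; exists (S0 :&: S') => //.
  by rewrite in_setD Tnc !inE subsetIl cT eqxx.
by rewrite !inE => /andP[-> ->].
Qed.

Lemma cross_cores_structure :
  exists2 W : {set E}, #|W| <= q + q ^ t * q &
   [\/ {in CG, forall S', t < #|S' :&: W|},
       exists2 V : {set E}, t < #|V| & {in CF, forall S, V \subset S}
     | exists2 T : {set E}, #|T| = t & {in CF, forall S, T \subset S} /\
         {in CG, forall S', T \subset S' \/ t < #|S' :&: W|}].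
Proof.
have [W cW claim] := cross_cores_witness; exists W => //; set U := common_subsets CF t.
have UP T : T \in U -> #|T| = t /\ {in CF, forall S, T \subset S}.
  by rewrite inE => /andP[/eqP cT /forall_inP].
have [U1 | /card_gt1P[T1 [T2 [/UP[c1 T1F] /UP[c2 T2F] T12]]]] := leqP #|U| 1; last first.
  apply: Or32; exists (T1 :|: T2); last by move=> S SF; rewrite subUset T1F ?T2F.
  rewrite ltnNge; apply: contra T12 => small.
  have E1 : T1 = T1 :|: T2 by apply/eqP; rewrite eqEcard subsetUl c1.
  have E2 : T2 = T1 :|: T2 by apply/eqP; rewrite eqEcard subsetUr c2.
  by rewrite {1}E1 -E2.
have [U0 | Upos] := posnP #|U|.
  by apply: Or31 => S' /claim[[T] | //]; rewrite -/U (cards0_eq U0) inE.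
have /cards1P[T UT] : #|U| == 1 by rewrite eqn_leq U1.
have [cT TF] : #|T| = t /\ {in CF, forall S, T \subset S} by apply: UP; rewrite UT set11.
apply: Or33; exists T => //; split => // S' /claim[[T'] | ]; last by right.
by rewrite -/U UT inE => /eqP -> TS'; left.
Qed.

End CrossCores.

End Spread.

(** * The product bound *)

Section CrossIntersecting.
Variables (n t : nat).
Local Notation edgeset := {set {set 'I_(2 * n)}}.
Local Notation family := {set {set {set 'I_(2 * n)}}}.
Implicit Types (S T W : edgeset) (F G R : family) (p : edgeset * family).

Lemma cross_intersectingC F G : cross_intersecting n t F G -> cross_intersecting n t G F.
Proof. by move=> FG m m' mG m'F; rewrite setIC FG. Qed.

Lemma card_le_cross_trivial F G m0 :
  m0 \in F -> F \subset matchings n -> G \subset matchings n -> cross_intersecting n t F G ->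
  #|G| <= n ^ t * odd_dfact (n - t).
Proof.
move=> m0F FM GM FG.
apply: leq_trans (card_le_cover_trace (R := set0) (W := m0) (k := t) GM _) _.
  by move=> m mG _; exists m; rewrite // setIC FG.
rewrite cards0 add0n leq_mul2r; apply/orP; right.
exact/leq_expn2r/card_matching/(subsetP FM).
Qed.

Lemma card_in_star_meet F G T (m0 : edgeset) :
  cross_intersecting n t F G -> G \subset matchings n -> #|T| = t ->
  m0 \in G -> m0 \notin star T -> #|F :&: star T| <= n * odd_dfact (n - t.+1).
Proof.
move=> FG GM cT m0G m0T; have m0M := subsetP GM m0 m0G.
apply: leq_trans (card_star_meet m0M _ cT); last by move: m0T; rewrite inE m0M.
apply/subset_leq_card/subsetP => m /setIP[mF mT]; rewrite inE mT /=.
by rewrite setIC FG.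
Qed.

Variables (r q Rb : nat).

Lemma card_le_approx_trace F D R W k :
  F \subset matchings n -> spread_approx r q Rb F D R -> {in D, forall p, k <= #|p.1 :&: W|} ->
  #|F| <= Rb + #|W| ^ k * odd_dfact (n - k).
Proof.
move=> FM [cR DP coverF] DW; apply: leq_trans (card_le_cover_trace (R := R) FM _) _.
  move=> m mF mR; have [p pD mp] := coverF m mF mR; have [_ [_ _ Sp _]] := DP p pD.
  by exists p.1; [apply: DW | apply: Sp].
by rewrite leq_add2r.
Qed.

Lemma card_le_approx_core F D R S k :
  F \subset matchings n -> spread_approx r q Rb F D R -> #|S| < q ->
  {in D, forall p, k <= #|p.1 :&: S|} ->
  #|F| <= Rb + q ^ k * odd_dfact (n - k).
Proof.
move=> FM aF Sq DS; apply: leq_trans (card_le_approx_trace FM aF DS) _.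
rewrite leq_add2l leq_mul2r leq_expn2r ?orbT //; exact: ltnW.
Qed.

End CrossIntersecting.

(* One inequality for each case of the final case analysis; N = (2(n-t)-1)!!, N1 = (2(n-t)-3)!!. *)
Definition small_remainder n t q Rb : Prop :=
  let N := odd_dfact (n - t) in let N1 := odd_dfact (n - t.+1) in
  let X := q ^ t in let Y := (q + q ^ t * q) ^ t.+1 in
  [/\ Rb * (n ^ t * N) <= N * N,
      (Rb + N1) * (Rb + X * N) <= N * N,
      (Rb + Y * N1) * (Rb + X * N) <= N * N,
      (N + Rb) * (n * N1 + (Rb + Y * N1)) <= N * N &
      n * N1 * (N + (Rb + Y * N1)) <= N * N].

Section CrossProduct.
Variables (n t r q Rb : nat).
Local Notation edgeset := {set {set 'I_(2 * n)}}.
Local Notation family := {set {set {set 'I_(2 * n)}}}.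
Local Notation N := (odd_dfact (n - t)).
Local Notation N1 := (odd_dfact (n - t.+1)).
Local Notation Y := ((q + q ^ t * q) ^ t.+1).
Implicit Types (S T V W : edgeset) (p : edgeset * family).
Variables (F G : family) (DF DG : {set edgeset * family}) (RF RG : family).
Hypotheses (FM : F \subset matchings n) (GM : G \subset matchings n)
  (FG : cross_intersecting n t F G) (rbig : n + q < r)
  (aF : spread_approx r q Rb F DF RF) (aG : spread_approx r q Rb G DG RG).

Lemma cores_meet : {in DF & DG, forall p p', t <= #|p.1 :&: p'.1|}.
Proof.
case: aF => _ DFP _; case: aG => _ DGP _ p p' /DFP[pF spp] /DGP[p'G spp'].
apply: spread_cores_meet spp spp' _ rbig _.
  by move=> m /(subsetP p'G)/(subsetP GM)/card_matching.
by move=> m m' /(subsetP pF) mF /(subsetP p'G) m'G; apply: FG.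
Qed.

Lemma card_F_le_core p' : p' \in DG -> #|F| <= Rb + q ^ t * N.
Proof.
move=> p'D; apply: card_le_approx_core FM aF (spread_approx_core_small aG p'D) _.
by move=> p pD; apply: cores_meet.
Qed.

Lemma card_G_le_core p : p \in DF -> #|G| <= Rb + q ^ t * N.
Proof.
move=> pD; apply: card_le_approx_core GM aG (spread_approx_core_small aF pD) _.
by move=> p' p'D; rewrite setIC; apply: cores_meet.
Qed.

Lemma card_le_trace (H : family) D R W :
  H \subset matchings n -> spread_approx r q Rb H D R -> #|W| <= q + q ^ t * q ->
  {in D, forall p, t < #|p.1 :&: W|} -> #|H| <= Rb + Y * N1.
Proof.
move=> HM aH cW DW; apply: leq_trans (card_le_approx_trace HM aH DW) _.
by rewrite leq_add2l leq_mul2r leq_expn2r ?orbT.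
Qed.

Lemma card_F_le_common V :
  t < #|V| -> {in DF, forall p, V \subset p.1} -> #|F| <= Rb + N1.
Proof.
case: aF => cR DP coverF tV DV.
apply: leq_trans (card_le_cover_stars (R := RF) (TT := [set V]) (k := t.+1) FM _ _) _.
- by move=> S; rewrite inE => /eqP ->.
- move=> m mF mR; have [p pD mp] := coverF m mF mR; have [_ [_ _ Sp _]] := DP p pD.
  by exists V; rewrite ?inE // (subset_trans (DV p pD) (Sp m mp)).
- by rewrite cards1 mul1n leq_add2r.
Qed.

Lemma card_F_out_star T : {in DF, forall p, T \subset p.1} -> #|F :\: star T| <= Rb.
Proof.
case: aF => cR DP coverF TD; apply: leq_trans _ cR; apply/subset_leq_card/subsetP => m.
rewrite inE => /andP[mT mF]; apply: contraT => mR; have [p pD mp] := coverF m mF mR.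
have [_ [_ _ Sp _]] := DP p pD; move: mT; rewrite inE (subsetP FM m mF).
by rewrite (subset_trans (TD p pD) (Sp m mp)).
Qed.

Lemma card_G_out_star T W : #|W| <= q + q ^ t * q ->
  {in DG, forall p, T \subset p.1 \/ t < #|p.1 :&: W|} ->
  #|G :\: star T| <= Rb + Y * N1.
Proof.
case: aG => cR DP coverG cW TW; have GM' := subset_trans (subsetDl G (star T)) GM.
apply: leq_trans (card_le_cover_trace (R := RG) (W := W) (k := t.+1) GM' _) _; last first.
  by rewrite leq_add // leq_mul2r leq_expn2r ?orbT.
move=> m; rewrite inE => /andP[mT mG] mR; have [p pD mp] := coverG m mG mR.
have [_ [_ _ Sp _]] := DP p pD; exists p.1; last exact: Sp.
case: (TW p pD) => // Tp; move: mT; rewrite inE (subsetP GM m mG).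
by rewrite (subset_trans Tp (Sp m mp)).
Qed.

Lemma card_mul_le_star T W : #|W| <= q + q ^ t * q -> #|T| = t ->
  {in DF, forall p, T \subset p.1} ->
  {in DG, forall p, T \subset p.1 \/ t < #|p.1 :&: W|} ->
  (N + Rb) * (n * N1 + (Rb + Y * N1)) <= N * N -> n * N1 * (N + (Rb + Y * N1)) <= N * N ->
  #|F| * #|G| <= N * N.
Proof.
move=> cW cT TF TG I4 I5.
have Fout := card_F_out_star TF; have Gout := card_G_out_star cW TG.
have in_star (H : family) : #|H :&: star T| <= N.
  by rewrite -cT; apply: leq_trans (subset_leq_card (subsetIr _ _)) (card_star T).
rewrite -(cardsID (star T) F) -(cardsID (star T) G).
have [F0 | [m0]] := set_0Vmem (F :\: star T); last first.
  rewrite inE => /andP[m0T m0F]; apply: leq_trans I4; apply: leq_mul; first exact: leq_add.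
  exact: leq_add (card_in_star_meet (cross_intersectingC FG) FM cT m0F m0T) Gout.
rewrite F0 cards0 addn0; have [G0 | [m1]] := set_0Vmem (G :\: star T).
  by rewrite G0 cards0 addn0 leq_mul.
rewrite inE => /andP[m1T m1G]; apply: leq_trans I5; apply: leq_mul.
  exact: card_in_star_meet FG GM cT m1G m1T.
exact: leq_add.
Qed.

Lemma card_mul_le_approx : small_remainder n t q Rb -> #|F| * #|G| <= N * N.
Proof.
case=> I1 I2 I3 I4 I5.
have [DF0 | [p0 p0D]] := set_0Vmem DF.
  have [-> | [m0 m0F]] := set_0Vmem F; first by rewrite cards0.
  apply: leq_trans I1; apply: leq_mul.
    by move: aF; rewrite DF0; apply: spread_approx0.
  exact: card_le_cross_trivial m0F FM GM FG.
have [DG0 | [p0' p0'D]] := set_0Vmem DG.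
  have [-> | [m0 m0G]] := set_0Vmem G; first by rewrite cards0 muln0.
  apply: leq_trans I1; rewrite mulnC; apply: leq_mul.
    by move: aG; rewrite DG0; apply: spread_approx0.
  exact: card_le_cross_trivial m0G GM FM (cross_intersectingC FG).
have FX := card_F_le_core p0'D; have GX := card_G_le_core p0D.
pose CF := [set p.1 | p in DF]; pose CG := [set p.1 | p in DG].
have CFq : {in CF, forall S, #|S| <= q}.
  by move=> _ /imsetP[p pD ->]; exact: ltnW (spread_approx_core_small aF pD).
have CFG : {in CF & CG, forall S S', t <= #|S :&: S'|}.
  by move=> _ _ /imsetP[p pD ->] /imsetP[p' p'D ->]; apply: cores_meet.
have [W cW [CGW | [V tV CFV] | [T cT [CFT CGT]]]] :=
  @cross_cores_structure _ t q CF CG p0.1 (imset_f _ p0D) CFq CFG.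
- apply: leq_trans I3; rewrite mulnC; apply: leq_mul => //.
  by apply: card_le_trace GM aG cW _ => p pD; apply/CGW/imset_f.
- apply: leq_trans I2; apply: leq_mul => //.
  by apply: card_F_le_common tV _ => p pD; apply/CFV/imset_f.
- apply: card_mul_le_star cW cT _ _ I4 I5 => p pD; first exact/CFT/imset_f.
  exact/CGT/imset_f.
Qed.

End CrossProduct.

Lemma cross_product_bound n t r q Rb (F G : {set {set {set 'I_(2 * n)}}}) :
  0 < r -> n + q < r -> r ^ q * odd_dfact (n - q) <= Rb -> small_remainder n t q Rb ->
  F \subset matchings n -> G \subset matchings n -> cross_intersecting n t F G ->
  #|F| * #|G| <= odd_dfact (n - t) ^ 2.
Proof.
move=> r0 rbig hRb small FM GM FG.
have bounded (H : {set {set {set 'I_(2 * n)}}}) : H \subset matchings n -> q_bounded r q Rb H.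
  move=> HM S cS; apply: leq_trans hRb; rewrite leq_mul2l; apply/orP; right; rewrite -cS.
  apply: leq_trans (card_star S); apply/subset_leq_card/subsetP => m.
  by rewrite inE => /andP[mH Sm]; rewrite inE (subsetP HM m mH).
have [DF [RF aF]] := exists_spread_approx r0 (bounded F FM).
have [DG [RG aG]] := exists_spread_approx r0 (bounded G GM).
by rewrite -mulnn; apply: card_mul_le_approx FM GM FG rbig aF aG small.
Qed.

(** * Choice of the parameters *)

Lemma expnS_bernoulli x K : (x + 1 - K) * (x + 1) ^ K <= x ^ K * (x + 1).
Proof.
elim: K => [|K IH]; first by rewrite !expn0 subn0 muln1 mul1n.
have step : (x + 1 - K.+1) * (x + 1) <= x * (x + 1 - K) by nia.
rewrite expnS mulnA; apply: leq_trans (leq_mul step (leqnn _)) _.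
by rewrite -mulnA expnS -mulnA leq_mul.
Qed.

Lemma expnS_le_double x K : 2 * K <= x + 1 -> (x + 1) ^ K <= 2 * x ^ K.
Proof.
move=> hK; have half : (x + 1) * (x + 1) ^ K <= 2 * ((x + 1 - K) * (x + 1) ^ K).
  by rewrite mulnA leq_mul //; lia.
have := leq_trans half (leq_mul (leqnn 2) (expnS_bernoulli x K)).
by rewrite mulnA [(x + 1) * _]mulnC leq_pmul2r ?addn1.
Qed.

Lemma sqrn_le_exp2 j : 4 <= j -> j * j <= 2 ^ j.
Proof.
elim: j => // j IH; rewrite leq_eqVlt => /orP[/eqP <- // | ]; rewrite ltnS => j4.
have sq : j.+1 * j.+1 <= 2 * (j * j) by nia.
by rewrite expnS (leq_trans sq) // leq_mul2l IH.
Qed.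

Lemma poly_le_exp2 C K : exists M0, forall M, M0 <= M -> C * M ^ K <= 2 ^ M.
Proof.
pose j := 2 * K + C + 4; exists (2 ^ j).
have base : C * (2 ^ j) ^ K <= 2 ^ (2 ^ j).
  apply: leq_trans (leq_mul (ltnW (ltn_expl C (leqnn 2))) (leqnn _)) _.
  rewrite -expnM -expnD leq_exp2l //; apply: leq_trans (sqrn_le_exp2 _); rewrite /j; nia.
have j_le : j <= 2 ^ j := ltnW (ltn_expl j (leqnn 2)).
elim=> [|M IH]; first by rewrite leqn0 expn_eq0.
rewrite leq_eqVlt => /orP[/eqP <- // | ]; rewrite ltnS => jM.
have ratio : (M + 1) ^ K <= 2 * M ^ K by apply: expnS_le_double; rewrite /j in j_le jM *; lia.
rewrite expnS -addn1; apply: leq_trans (leq_mul (leqnn C) ratio) _.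
by rewrite mulnCA leq_mul2l IH.
Qed.

(* (2(n-t)-3)!! >= (2(n-q)-1)!! * b ^ (q-t-1) with b = 2(n-q)+1, and r ^ q n ^ t <= b ^ (q-t-1)
   follows from 4 r <= 3 b and 3 ^ q b ^ (t+1) n ^ t <= 4 ^ q. *)
Lemma remainder_le_odd_dfact n t q r :
  t < q -> q <= n -> 4 * r <= 3 * (2 * (n - q) + 1) ->
  3 ^ q * ((2 * (n - q) + 1) ^ t.+1 * n ^ t) <= 4 ^ q ->
  r ^ q * odd_dfact (n - q) * n ^ t <= odd_dfact (n - t.+1).
Proof.
move=> tq qn r_le three_four; set b := 2 * (n - q) + 1.
have -> : n - t.+1 = (n - q) + (q - t.+1) by lia.
apply: leq_trans (odd_dfact_mulX (n - q) (q - t.+1)).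
rewrite mulnAC [X in _ <= X]mulnC leq_mul2r; apply/orP; right.
have pos : 0 < 4 ^ q * b ^ t.+1 by rewrite muln_gt0 !expn_gt0 /b addn1.
rewrite -(leq_pmul2r pos).
have -> : b ^ (q - t.+1) * (4 ^ q * b ^ t.+1) = b ^ q * 4 ^ q.
  by rewrite mulnCA -expnD subnK // mulnC.
have -> : r ^ q * n ^ t * (4 ^ q * b ^ t.+1) = (4 * r) ^ q * (b ^ t.+1 * n ^ t).
  by rewrite expnMn; ring.
apply: leq_trans (leq_mul (leq_expn2r q r_le) (leqnn _)) _.
have -> : (3 * b) ^ q * (b ^ t.+1 * n ^ t) = b ^ q * (3 ^ q * (b ^ t.+1 * n ^ t)).
  by rewrite expnMn; ring.
by rewrite leq_mul2l three_four orbT.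
Qed.

Lemma remainder_le_log n t M :
  let q := 5 * ((2 * t + 1) * M) in
  2 * n + 1 <= 2 ^ M -> t < q -> 5 * q + 1 <= n ->
  (n + q + 1) ^ q * odd_dfact (n - q) * n ^ t <= odd_dfact (n - t.+1).
Proof.
move=> q nM tq qn; apply: remainder_le_odd_dfact => //; try lia.
set b := 2 * (n - q) + 1; pose c := (2 * t + 1) * M.
apply: (@leq_trans (3 ^ q * 2 ^ c)).
  rewrite leq_mul2l; apply/orP; right.
  have -> : 2 ^ c = (2 ^ M) ^ t.+1 * (2 ^ M) ^ t by rewrite -!expnM -expnD /c; congr (2 ^ _); ring.
  by apply: leq_mul; apply: leq_expn2r; rewrite /b; lia.
have -> : q = 5 * c by [].
by rewrite (expnM 3 5 c) (expnM 4 5 c) -expnMn leq_expn2r.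
Qed.

Lemma odd_factor_conditions n t X Y :
  16 * t + 8 <= n -> 4 * ((1 + Y) * (1 + X)) <= n ->
  let a := 2 * (n - t.+1) + 1 in
  [/\ (1 + Y) * (1 + X) <= a, (a + 1) * (n + 1 + Y) <= a * a & n * (a + 1 + Y) <= a * a].
Proof.
move=> nt nXY a.
have Yn : 4 * (1 + Y) <= n.
  by apply: leq_trans nXY; rewrite leq_mul2l /= leq_pmulr; lia.
have a_ge : 15 * n <= 8 * a by rewrite /a; lia.
have a_le : a <= 2 * n by rewrite /a; lia.
split; [rewrite /a; lia | | nia].
have Y_le : n + 1 + Y <= 5 * n %/ 4 + 1 by lia.
nia.
Qed.

Lemma leq_mul_scaled N1 a x y c1 c2 :
  x <= c1 * N1 -> y <= c2 * N1 -> c1 * c2 <= a * a -> x * y <= a * N1 * (a * N1).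
Proof.
move=> xc1 yc2 c12; apply: leq_trans (leq_mul xc1 yc2) _.
by rewrite mulnACA [X in _ <= X]mulnACA leq_mul2r c12 orbT.
Qed.

Lemma small_products_le n t N1 Rb X Y a :
  Rb * n ^ t <= N1 -> 0 < n -> 0 < Y ->
  (1 + Y) * (1 + X) <= a -> (a + 1) * (n + 1 + Y) <= a * a -> n * (a + 1 + Y) <= a * a ->
  let N := a * N1 in
  [/\ Rb * (n ^ t * N) <= N * N,
      (Rb + N1) * (Rb + X * N) <= N * N,
      (Rb + Y * N1) * (Rb + X * N) <= N * N,
      (N + Rb) * (n * N1 + (Rb + Y * N1)) <= N * N &
      n * N1 * (N + (Rb + Y * N1)) <= N * N].
Proof.
move=> key n0 Y0 C1 C2 C3 N.
have Rb_le : Rb <= N1 by apply: leq_trans key; rewrite leq_pmulr // expn_gt0 n0.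
have N1N : N1 <= N by rewrite leq_pmull //; apply: leq_trans C1; rewrite muln_gt0.
have I3 : (Rb + Y * N1) * (Rb + X * N) <= N * N.
  apply: (@leq_mul_scaled _ _ _ _ (1 + Y) ((1 + X) * a)).
  - by rewrite mulnDl mul1n leq_add2r.
  - by rewrite -mulnA mulnDl mul1n leq_add // (leq_trans Rb_le N1N).
  - by rewrite mulnA leq_mul2r C1 orbT.
split => //.
- by rewrite mulnA leq_mul2r (leq_trans key N1N) orbT.
- by apply: leq_trans I3; rewrite leq_mul2r leq_add2l leq_pmull ?orbT.
- apply: (@leq_mul_scaled _ _ _ _ (a + 1) (n + 1 + Y)) C2.
    by rewrite mulnDl mul1n leq_add2l.
  by rewrite !mulnDl mul1n -addnA leq_add2l leq_add2r.
- apply: (@leq_mul_scaled _ _ _ _ n (a + 1 + Y)) C3 => //.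
  by rewrite !mulnDl mul1n -addnA leq_add2l leq_add2r.
Qed.

Lemma small_remainder_of n t q Rb :
  0 < q -> 16 * t + 8 <= n -> 4 * ((1 + (q + q ^ t * q) ^ t.+1) * (1 + q ^ t)) <= n ->
  Rb * n ^ t <= odd_dfact (n - t.+1) -> small_remainder n t q Rb.
Proof.
move=> q0 nt nXY key; have [C1 C2 C3] := odd_factor_conditions nt nXY.
rewrite /small_remainder; have -> : odd_dfact (n - t) = (2 * (n - t.+1) + 1) * odd_dfact (n - t.+1).
  by rewrite mulnC -odd_dfactS; congr odd_dfact; lia.
by apply: small_products_le key _ _ C1 C2 C3; rewrite ?expn_gt0; lia.
Qed.

Lemma thresholds_le_monomial q t : 0 < q ->
  4 * ((1 + (q + q ^ t * q) ^ t.+1) * (1 + q ^ t)) + (5 * q + 1) + (16 * t + 8)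
  <= (2 ^ (t + 5) + 16 * t + 14) * q ^ (t + t.+1 * t.+1).
Proof.
move=> q0; set K := t + t.+1 * t.+1.
have qX_gt0 e : 0 < q ^ e by rewrite expn_gt0 q0.
have X_le : 1 + q ^ t <= 2 * q ^ t by have := qX_gt0 t; lia.
have base_le : q + q ^ t * q <= 2 * q ^ t.+1.
  by rewrite -expnSr; have := leq_pexp2l q0 (ltn0Sn t); rewrite expn1; lia.
have Y_le : 1 + (q + q ^ t * q) ^ t.+1 <= 2 ^ t.+2 * q ^ (t.+1 * t.+1).
  have := leq_expn2r t.+1 base_le; rewrite expnMn -expnM [2 ^ t.+2]expnS.
  by have := qX_gt0 (t.+1 * t.+1); have := expn_gt0 2 t.+1; nia.
have XY_le : 4 * ((1 + (q + q ^ t * q) ^ t.+1) * (1 + q ^ t)) <= 2 ^ (t + 5) * q ^ K.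
  apply: leq_trans (leq_mul (leqnn 4) (leq_mul Y_le X_le)) _.
  by rewrite /K expnD addnC expnD !expnS; apply: eq_leq; ring.
have qK : q <= q ^ K by rewrite -{1}(expn1 q) leq_pexp2l // /K; lia.
have q_le : 5 * q + 1 <= 6 * q ^ K by have := qX_gt0 K; lia.
have t_le : 16 * t + 8 <= (16 * t + 8) * q ^ K by rewrite leq_pmulr.
by apply: leq_trans (leq_add (leq_add XY_le q_le) t_le) _; apply: eq_leq; ring.
Qed.

(* q is a large multiple of log n: large enough for the remainder to be small, yet polynomials
   in q stay below n. *)
Lemma exists_parameters t : exists n0, forall n, n0 <= n ->
  exists r q, [/\ 0 < r, n + q < r & small_remainder n t q (r ^ q * odd_dfact (n - q))].
Proof.
pose K := t + t.+1 * t.+1; pose c0 := 5 * (2 * t + 1).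
pose C := 4 * ((2 ^ (t + 5) + 16 * t + 14) * c0 ^ K).
have [M0 HM0] := poly_le_exp2 C K; exists (2 ^ M0) => n n0n.
have n0 : 0 < n by apply: leq_trans n0n; rewrite expn_gt0.
pose L := trunc_log 2 n; pose M := L.+2; pose q := c0 * M.
have [M0L Ln nL] : [/\ M0 <= L, 2 ^ L <= n & n < 2 ^ L.+1].
  by split; [apply: trunc_log_max | apply: trunc_logP | apply: trunc_log_ltn].
have q0 : 0 < q by rewrite /q /c0 /M; lia.
have PB := thresholds_le_monomial t q0; set P := 4 * _ + _ + _ in PB.
have Pn : P <= n.
  have E2M : 2 ^ M = 4 * 2 ^ L by rewrite /M !expnS mulnA.
  have : 4 * P <= 4 * 2 ^ L.
    rewrite -E2M; apply: leq_trans (HM0 M _); last by rewrite /M; lia.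
    rewrite /C -mulnA leq_mul2l /=; apply: leq_trans PB _.
    by rewrite /q expnMn mulnA.
  by rewrite leq_mul2l /= => P_le; apply: leq_trans P_le Ln.
exists (n + q + 1), q; split; [lia | lia | apply: small_remainder_of => //; try lia].
have q5 : q = 5 * ((2 * t + 1) * M) by rewrite /q /c0 mulnA.
have [nM tq qn] : [/\ 2 * n + 1 <= 2 ^ M, t < q & 5 * q + 1 <= n].
  by split; [move: nL; rewrite /M !expnS | rewrite q5 | move: Pn; rewrite /P]; lia.
by move: tq qn; rewrite q5; apply: remainder_le_log.
Qed.

Theorem mainTheorem7 :
  forall t : nat, exists n0 : nat, forall n : nat, n0 <= n ->
  forall F G : {set {set {set 'I_(2 * n)}}},
    F \subset matchings n -> G \subset matchings n ->
    cross_intersecting n t F G ->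
    #|F| * #|G| <= (odd_dfact (n - t)) ^ 2.
Proof.
move=> t; have [n0 params] := exists_parameters t.
exists n0 => n n0n F G FM GM FG; have [r [q [r0 rbig small]]] := params n n0n.
exact: cross_product_bound r0 rbig (leqnn _) small FM GM FG.
Qed.
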